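(* Let $\phi:Z\to[-\infty,+\infty]$ be proper and closed and suppose Assumptions (A1) and (A2) hold for some $\lambda\in\mathbb R$. Then for every $z\in Z$ and $\tau\in(0,1/\lambda^-)$, $|\partial\phi|(J_\tau z)\le\frac{\mathsf d_Z(J_\tau z,z)}{\tau}\le\frac1{1+\lambda\tau}|\partial\phi|(z)$. In particular $J_\tau z\in D(|\partial\phi|)$.
   Context: $(X,\mathsf d_X)$, $(Y,\mathsf d_Y)$ complete metric spaces; $Z=X\times Y$ with $\mathsf d_Z=(\mathsf d_X^2+\mathsf d_Y^2)^{1/2}$. $D_X\phi=\{x:\phi(x,y)<+\infty\ \forall y\}$, $D_Y\phi=\{y:\phi(x,y)>-\infty\ \forall x\}$, $D\phi=D_X\phi\times D_Y\phi$; proper: $D\phi\ne\emptyset$; closed: for $x\in D_X\phi$, $y\mapsto\phi(x,y)$ upper semicontinuous, for $y\in D_Y\phi$, $x\mapsto\phi(x,y)$ lower semicontinuous. (A1): $\phi=+\infty$ on $(X\setminus D_X\phi)\times D_Y\phi$, $\phi=-\infty$ on $D_X\phi\times(Y\setminus D_Y\phi)$. $\lambda^-=\max\{-\lambda,0\}$, $1/\lambda^-:=+\infty$ if $\lambda^-=0$. $\Phi_\tau(x,y;x',y')=\phi(x',y')+\frac1{2\tau}(\mathsf d_X^2(x',x)-\mathsf d_Y^2(y',y))$. $f$ on $Z$ is $\mu$-convex-concave along curves $\gamma,\sigma$ if for all $t\in[0,1]$: $f(\gamma_t,y)\le(1-t)f(\gamma_0,y)+tf(\gamma_1,y)-\frac\mu2t(1-t)\mathsf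 d_X^2(\gamma_0,\gamma_1)$ for all $y$ and $f(x,\sigma_t)\ge(1-t)f(x,\sigma_0)+tf(x,\sigma_1)+\frac\mu2t(1-t)\mathsf d_Y^2(\sigma_0,\sigma_1)$ for all $x$. (A2) for $\lambda$: for every $(x,y)\in Z$, $(x_0,y_0),(x_1,y_1)\in D\phi$ there are continuous curves $\gamma$ from $x_0$ to $x_1$, $\sigma$ from $y_0$ to $y_1$ such that for all $\tau\in(0,1/\lambda^-)$, $(x',y')\mapsto\Phi_\tau(x,y;x',y')$ is $(\tau^{-1}+\lambda)$-convex-concave along them. $J_\tau z$ is the (unique, existing under these assumptions) saddle point of $z'\mapsto\Phi_\tau(z;z')$. Slope: for $z=(x,y)\in D\phi$ not isolated, $|\partial\phi|(z)=\limsup_{D\phi\ni z'=(x',y')\to z}\frac{\max\{\phi(x,y')-\phi(x',y),0\}}{\mathsf d_Z(z',z)}$; $0$ at isolated points of $D\phi$; $+\infty$ off $D\phi$. $D(|\partial\phi|)=\{z\in D\phi:|\partial\phi|(z)<+\infty\}$. *)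

From HB Require Import structures.
From mathcomp Require Import all_boot all_order all_algebra.
From mathcomp Require Import boolp classical_sets reals constructive_ereal ereal.
Set Implicit Arguments. Unset Strict Implicit. Unset Printing Implicit Defensive.
Import Order.TTheory GRing.Theory Num.Theory.
Local Open Scope ring_scope.
Local Open Scope classical_set_scope.

Section Defs.
Variable R : realType.

Definition is_metric (T : Type) (d : T -> T -> R) : Prop :=
  (forall x y, d x y = 0 <-> x = y) /\
  (forall x y, d x y = d y x) /\
  (forall x y z, d x z <= d x y + d y z).

Definition complete_metric (T : Type) (d : T -> T -> R) : Prop :=
  forall u : nat -> T,
    (forall e, 0 < e -> exists N, forall m n, (N <= m)%N -> (N <= n)%N -> d (u m) (u n) < e) ->
    exists l, forall e, 0 < e -> exists N, forall n, (N <= n)%N -> d (u n) l < e.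

Definition dZ (X Y : Type) (dX : X -> X -> R) (dY : Y -> Y -> R)
  (z z' : X * Y) : R :=
  Num.sqrt (dX z.1 z'.1 ^+ 2 + dY z.2 z'.2 ^+ 2).

Definition DX (X Y : Type) (phi : X * Y -> \bar R) : set X :=
  [set x | forall y, (phi (x, y) < +oo)%E].
Definition DY (X Y : Type) (phi : X * Y -> \bar R) : set Y :=
  [set y | forall x, (-oo < phi (x, y))%E].
Definition Dphi (X Y : Type) (phi : X * Y -> \bar R) : set (X * Y) :=
  [set z | DX phi z.1 /\ DY phi z.2].

Definition proper_fun (X Y : Type) (phi : X * Y -> \bar R) : Prop :=
  Dphi phi !=set0.

Definition lsc (T : Type) (d : T -> T -> R) (f : T -> \bar R) : Prop :=
  forall x (a : R), (a%:E < f x)%E ->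
    exists r, 0 < r /\ forall x', d x x' < r -> (a%:E < f x')%E.
Definition usc (T : Type) (d : T -> T -> R) (f : T -> \bar R) : Prop :=
  forall x (a : R), (f x < a%:E)%E ->
    exists r, 0 < r /\ forall x', d x x' < r -> (f x' < a%:E)%E.

Definition closed_fun (X Y : Type) (dX : X -> X -> R) (dY : Y -> Y -> R)
  (phi : X * Y -> \bar R) : Prop :=
  (forall x, DX phi x -> usc dY (fun y => phi (x, y))) /\
  (forall y, DY phi y -> lsc dX (fun x => phi (x, y))).

Definition A1 (X Y : Type) (phi : X * Y -> \bar R) : Prop :=
  (forall x y, ~ DX phi x -> DY phi y -> phi (x, y) = +oo%E) /\
  (forall x y, DX phi x -> ~ DY phi y -> phi (x, y) = -oo%E).

Definition lamneg (lam : R) : R := Num.max (- lam) 0.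
Definition inv_lamneg (lam : R) : \bar R :=
  if lamneg lam == 0 then +oo%E else ((lamneg lam)^-1)%:E.
Definition tau_range (lam tau : R) : Prop := 0 < tau /\ (tau%:E < inv_lamneg lam)%E.

Definition Phi (X Y : Type) (dX : X -> X -> R) (dY : Y -> Y -> R)
  (phi : X * Y -> \bar R) (tau : R) (z z' : X * Y) : \bar R :=
  (phi z' + ((dX z'.1 z.1 ^+ 2 - dY z'.2 z.2 ^+ 2) / (2 * tau))%:E)%E.

Definition curve_cont (T : Type) (d : T -> T -> R) (g : R -> T) : Prop :=
  forall t, 0 <= t <= 1 -> forall e, 0 < e -> exists del, 0 < del /\
    forall s, 0 <= s <= 1 -> `|s - t| < del -> d (g s) (g t) < e.

Definition cvx_ccv_along (X Y : Type) (dX : X -> X -> R) (dY : Y -> Y -> R)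
  (f : X * Y -> \bar R) (mu : R) (gam : R -> X) (sig : R -> Y) : Prop :=
  forall t, 0 <= t <= 1 ->
   (forall y, (f (gam t, y) <= (1 - t)%R%:E * f (gam 0%R, y) + t%:E * f (gam 1%R, y)
                 - (mu / 2 * t * (1 - t) * dX (gam 0%R) (gam 1%R) ^+ 2)%R%:E)%E) /\
   (forall x, (f (x, sig t) >= (1 - t)%R%:E * f (x, sig 0%R) + t%:E * f (x, sig 1%R)
                 + (mu / 2 * t * (1 - t) * dY (sig 0%R) (sig 1%R) ^+ 2)%R%:E)%E).

Definition A2 (X Y : Type) (dX : X -> X -> R) (dY : Y -> Y -> R)
  (phi : X * Y -> \bar R) (lam : R) : Prop :=
  forall (z z0 z1 : X * Y), Dphi phi z0 -> Dphi phi z1 ->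
    exists (gam : R -> X) (sig : R -> Y),
      curve_cont dX gam /\ curve_cont dY sig /\
      gam 0 = z0.1 /\ gam 1 = z1.1 /\ sig 0 = z0.2 /\ sig 1 = z1.2 /\
      forall tau, tau_range lam tau ->
        cvx_ccv_along dX dY (Phi dX dY phi tau z) (tau^-1 + lam) gam sig.

Definition saddle_point (X Y : Type) (F : X * Y -> \bar R) (zb : X * Y) : Prop :=
  forall x y, (F (zb.1, y) <= F zb)%E /\ (F zb <= F (x, zb.2))%E.

Definition isolated_in (T : Type) (d : T -> T -> R) (A : set T) (z : T) : Prop :=
  exists r, 0 < r /\ forall z', A z' -> ~ (0 < d z' z < r).

Definition slope_ratio (X Y : Type) (dX : X -> X -> R) (dY : Y -> Y -> R)
  (phi : X * Y -> \bar R) (z z' : X * Y) : \bar R :=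
  (maxe (phi (z.1, z'.2) - phi (z'.1, z.2)) 0%E * ((dZ dX dY z' z)^-1)%:E)%E.

Definition slope (X Y : Type) (dX : X -> X -> R) (dY : Y -> Y -> R)
  (phi : X * Y -> \bar R) (z : X * Y) : \bar R :=
  if `[< Dphi phi z >] then
    if `[< isolated_in (dZ dX dY) (Dphi phi) z >] then 0%E
    else ereal_inf [set s | exists r, 0 < r /\
           s = ereal_sup [set v | exists z', Dphi phi z' /\ 0 < dZ dX dY z' z < r /\
                                           v = slope_ratio dX dY phi z z']]
  else +oo%E.

End Defs.

From HB Require Import structures.
From mathcomp Require Import all_boot all_order all_algebra.
From mathcomp Require Import boolp classical_sets reals constructive_ereal ereal.
From mathcomp Require Import ring lra.
Import Order.TTheory GRing.Theory Num.Theory.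
Local Open Scope ring_scope.
Local Open Scope classical_set_scope.
Set Implicit Arguments. Unset Strict Implicit.

(* Write z = (x0, y0), J = (x1, y1) and D = d_Z(J, z).  The upper bound on
   |dphi|(J) is read off the two saddle inequalities Phi_tau(z; x1, y') <=
   Phi_tau(z; x', y1): the quadratic terms change by at most
   (d_Z(z', J)^2 + 2 D d_Z(z', J)) / (2 tau) when z' moves near J.
   For the lower bound on |dphi|(z), take the curves (gam, sig) from z to J
   given by (A2), along which Phi_s(z; .) is (1/s + lam)-convex-concave for all
   small s.  Letting s -> 0 gives d(gam_t, x0) <= t d(x1, x0), and likewise
   for sig; since J is a saddle point, strong convexity-concavity at s = tau
   gives phi(x0, sig_t) - phi(gam_t, y0) >= mu/2 t (2 - t) D^2 with
   mu = 1/tau + lam.  Dividing by d_Z((gam_t, sig_t), z) <= t D and letting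
   t -> 0 yields |dphi|(z) >= mu D = (1 + lam tau) D / tau. *)

Section RealFacts.
Variable R : rcfType.

Lemma le0_of_le_small_mul (u s0 C : R) : 0 < s0 ->
  (forall s : R, 0 < s -> s <= s0 -> u <= s * C) -> u <= 0.
Proof.
move=> s0_gt0 small; apply/ler_addgt0Pr => e e_gt0; rewrite add0r.
have C1_gt0 : 0 < `|C| + 1 by rewrite ltr_pwDr ?normr_ge0.
pose s := Num.min s0 (e / (`|C| + 1)).
have s_gt0 : 0 < s by rewrite lt_min s0_gt0 divr_gt0.
apply: (le_trans (small s s_gt0 _)); first by rewrite ge_min lexx.
have sC : s * C <= s * (`|C| + 1) by rewrite ler_pM2l // (le_trans (ler_norm C)) ?lerDl.
by apply: (le_trans sC); rewrite -ler_pdivlMr // ge_min lexx orbT.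
Qed.

Lemma le_of_mul_lt1_le (u v : R) : (forall t : R, 0 < t -> t < 1 -> t * v <= u) -> v <= u.
Proof.
move=> hv; rewrite -subr_le0.
apply: (le0_of_le_small_mul (s0 := 1 / 2) (C := v)) => // s s_gt0 s_le.
have := hv (1 - s); lra.
Qed.

Lemma strong_convex_min_gap (f0 f1 c : R) :
  (forall t : R, 0 < t -> t < 1 -> f1 <= (1 - t) * f0 + t * f1 - t * (1 - t) * c) ->
  c <= f0 - f1.
Proof.
move=> cvx; apply: le_of_mul_lt1_le => t t_gt0 t_lt1.
have gap := cvx t t_gt0 t_lt1.
have : 0 <= (1 - t) * (f0 - f1 - t * c) by lra.
rewrite pmulr_rge0 ?subr_gt0 //; lra.
Qed.

Lemma le_mul_of_sqr_le_small (a P t s0 C : R) : 0 <= a -> 0 <= P -> 0 <= t -> 0 < s0 ->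
  (forall s : R, 0 < s -> s <= s0 -> a ^+ 2 <= t ^+ 2 * P ^+ 2 + s * C) -> a <= t * P.
Proof.
move=> a_ge0 P_ge0 t_ge0 s0_gt0 small.
rewrite -ler_sqr ?nnegrE ?mulr_ge0 // exprMn -subr_le0.
apply: (le0_of_le_small_mul (C := C) s0_gt0) => s s_gt0 s_le.
have := small s s_gt0 s_le; lra.
Qed.

Lemma cauchy_schwarz2 (a b c v : R) : 0 <= a -> 0 <= b -> 0 <= c -> 0 <= v ->
  a * c + b * v <= Num.sqrt (a ^+ 2 + b ^+ 2) * Num.sqrt (c ^+ 2 + v ^+ 2).
Proof.
move=> a0 b0 c0 v0.
rewrite -sqrtrM ?addr_ge0 ?sqr_ge0 //.
rewrite -[leLHS]ger0_norm ?addr_ge0 ?mulr_ge0 // -sqrtr_sqr.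
rewrite ler_sqrt ?mulr_ge0 ?addr_ge0 ?sqr_ge0 // -subr_ge0.
have -> : (a ^+ 2 + b ^+ 2) * (c ^+ 2 + v ^+ 2) - (a * c + b * v) ^+ 2
  = (a * v - b * c) ^+ 2 by ring.
exact: sqr_ge0.
Qed.

Lemma minkowski2 (a b c v : R) : 0 <= a -> 0 <= b -> 0 <= c -> 0 <= v ->
  Num.sqrt ((a + c) ^+ 2 + (b + v) ^+ 2)
    <= Num.sqrt (a ^+ 2 + b ^+ 2) + Num.sqrt (c ^+ 2 + v ^+ 2).
Proof.
move=> a0 b0 c0 v0; have cs := cauchy_schwarz2 a0 b0 c0 v0.
set A := Num.sqrt (a ^+ 2 + b ^+ 2) in cs *; set B := Num.sqrt (c ^+ 2 + v ^+ 2) in cs *.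
have A2 : A ^+ 2 = a ^+ 2 + b ^+ 2 by rewrite sqr_sqrtr ?addr_ge0 ?sqr_ge0.
have B2 : B ^+ 2 = c ^+ 2 + v ^+ 2 by rewrite sqr_sqrtr ?addr_ge0 ?sqr_ge0.
rewrite -[leRHS]ger0_norm ?addr_ge0 ?sqrtr_ge0 // -sqrtr_sqr.
rewrite ler_sqrt ?sqr_ge0 // !sqrrD; lra.
Qed.

Lemma mulr_subr_le_of_le_div (c a b u v : R) : 0 < c ->
  a + u / c <= b + v / c -> c * (a - b) <= v - u.
Proof. by move=> c_gt0 h; rewrite mulrC -ler_pdivlMr // mulrBl; lra. Qed.

Lemma sqr_le_of_strong_convex (s t l a P fa f0 f1 : R) : 0 < s ->
  fa + a / (2 * s) <= (1 - t) * f0 + t * (f1 + P / (2 * s)) - (s^-1 + l) / 2 * t * (1 - t) * P ->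
  a <= t ^+ 2 * P + s * (2 * ((1 - t) * f0 + t * f1 - fa) - l * t * (1 - t) * P).
Proof.
move=> s_gt0 cvx; rewrite -subr_ge0; rewrite -subr_ge0 in cvx.
have := mulr_ge0 (ltW (mulr_gt0 (ltr0Sn _ 1) s_gt0)) cvx.
by congr (_ <= _); field; rewrite gt_eqF.
Qed.

Lemma ratio_ge_of_gap (mu D t e r N : R) : 0 < mu -> 0 < D -> 0 < t -> t <= 1 ->
  t * (mu * D) <= e -> 0 < r -> r <= t * D -> mu / 2 * t * (2 - t) * D ^+ 2 <= N ->
  mu * D - e <= N / r.
Proof.
move=> mu_gt0 D_gt0 t_gt0 t_le1 te r_gt0 rtD gap; rewrite ler_pdivlMr //.
have muD_gt0 : 0 < mu * D by rewrite mulr_gt0.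
have half_ge0 : 0 <= 1 - t / 2 by lra.
have muD_ge0 := mulr_ge0 (ltW muD_gt0) half_ge0.
have tmuD_ge0 : 0 <= t * (mu * D) by rewrite mulr_ge0 ?ltW.
have h1 : (mu * D - e) * r <= mu * D * (1 - t / 2) * r by rewrite ler_pM2r //; lra.
have h2 : mu * D * (1 - t / 2) * r <= mu * D * (1 - t / 2) * (t * D) by rewrite ler_wpM2l.
have gapE : mu / 2 * t * (2 - t) * D ^+ 2 = mu * D * (1 - t / 2) * (t * D) by field.
lra.
Qed.

End RealFacts.

Lemma metric_xx (R : realType) (T : Type) (d : T -> T -> R) :
  is_metric d -> forall x, d x x = 0.
Proof. by case=> d0 _ x; apply/d0. Qed.

Lemma metric_ge0 (R : realType) (T : Type) (d : T -> T -> R) :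
  is_metric d -> forall x y, 0 <= d x y.
Proof.
move=> hd x y; have := hd.2.2 x y x; rewrite (metric_xx hd) (hd.2.1 y x); lra.
Qed.

Section ProductDistance.
Variables (R : realType) (X Y : Type) (dX : X -> X -> R) (dY : Y -> Y -> R).

Lemma dZ_ge0 (z z' : X * Y) : 0 <= dZ dX dY z z'.
Proof. exact: sqrtr_ge0. Qed.

Lemma sqr_dZ (z z' : X * Y) : dZ dX dY z z' ^+ 2 = dX z.1 z'.1 ^+ 2 + dY z.2 z'.2 ^+ 2.
Proof. by rewrite sqr_sqrtr ?addr_ge0 ?sqr_ge0. Qed.

Hypotheses (hX : is_metric dX) (hY : is_metric dY).

Lemma dZ_eq0 (z z' : X * Y) : dZ dX dY z z' = 0 -> z = z'.
Proof.
case: z z' => [x y] [x' y'] /(congr1 (fun r => r ^+ 2)); rewrite sqr_dZ expr0n /=.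
have := sqr_ge0 (dX x x'); have := sqr_ge0 (dY y y') => hy hx d0.
have /eqP : dX x x' ^+ 2 = 0 by lra.
have /eqP : dY y y' ^+ 2 = 0 by lra.
by rewrite !expf_eq0 /= => /eqP/hY.1 -> /eqP/hX.1 ->.
Qed.

Lemma dZ_triangle (z z' z'' : X * Y) :
  dZ dX dY z z'' <= dZ dX dY z z' + dZ dX dY z' z''.
Proof.
apply: le_trans (minkowski2 (metric_ge0 hX _ _) (metric_ge0 hY _ _)
                  (metric_ge0 hX _ _) (metric_ge0 hY _ _)).
rewrite ler_sqrt ?addr_ge0 ?sqr_ge0 // lerD // ler_sqr ?nnegrE
  ?addr_ge0 ?(metric_ge0 hX, metric_ge0 hY) //.
- exact: hX.2.2.
- exact: hY.2.2.
Qed.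

End ProductDistance.

Section Slope.
Variables (R : realType) (X Y : Type) (dX : X -> X -> R) (dY : Y -> Y -> R).
Variable phi : X * Y -> \bar R.

Lemma Dphi_fin x y : DX phi x -> DY phi y -> phi (x, y) = (fine (phi (x, y)))%:E.
Proof. by move=> hx hy; rewrite fineK // fin_numElt hy hx. Qed.

Lemma slope_ratioE (w z' : X * Y) (a b : R) :
  phi (w.1, z'.2) = a%:E -> phi (z'.1, w.2) = b%:E ->
  slope_ratio dX dY phi w z' = (Num.max (a - b) 0 / dZ dX dY z' w)%:E.
Proof. by rewrite /slope_ratio => -> ->; rewrite -EFinB -EFin_max -EFinM. Qed.

Lemma slope_ratio_ge0 (w z' : X * Y) : (0 <= slope_ratio dX dY phi w z')%E.
Proof.
by rewrite /slope_ratio mule_ge0 ?le_max ?lexx ?orbT // lee_fin invr_ge0 dZ_ge0.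
Qed.

Lemma slope_notin_Dphi (w : X * Y) : ~ Dphi phi w -> slope dX dY phi w = +oo%E.
Proof. by move=> w_notin; rewrite /slope asboolF. Qed.

Lemma slope_ge0 (w : X * Y) : (0 <= slope dX dY phi w)%E.
Proof.
rewrite /slope; case: ifPn => // _; case: ifPn => // /asboolPn not_isolated.
apply: le_ereal_inf_tmp => _ [r [r_gt0 ->]].
have [z' [z'_in z'_near]] : exists z', Dphi phi z' /\ 0 < dZ dX dY z' w < r.
  apply: contrapT => none; apply: not_isolated; exists r; split => // z' z'_in z'_near.
  by apply: none; exists z'.
apply: le_trans (slope_ratio_ge0 w z') _.
by apply: ereal_sup_ubound; exists z'.
Qed.

Lemma slope_le (w : X * Y) (M : R) : 0 <= M -> Dphi phi w ->
  (forall e, 0 < e -> exists r, 0 < r /\ forall z', Dphi phi z' -> 0 < dZ dX dY z' w < r ->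
      (slope_ratio dX dY phi w z' <= (M + e)%:E)%E) ->
  (slope dX dY phi w <= M%:E)%E.
Proof.
move=> M_ge0 w_in bound; rewrite /slope (asboolT w_in); case: ifPn => _; first by rewrite lee_fin.
apply/lee_addgt0Pr => e e_gt0; have [r [r_gt0 bound_r]] := bound e e_gt0.
apply: le_trans (ereal_inf_lbound _) _; first by exists r.
by apply: ge_ereal_sup => _ [z' [z'_in [z'_near ->]]]; rewrite -EFinD; exact: bound_r.
Qed.

Lemma slope_ge (w : X * Y) (M : R) : Dphi phi w ->
  (forall e r, 0 < e -> 0 < r -> exists z', Dphi phi z' /\ 0 < dZ dX dY z' w < r /\
      ((M - e)%:E <= slope_ratio dX dY phi w z')%E) ->
  (M%:E <= slope dX dY phi w)%E.
Proof.
move=> w_in near; rewrite /slope (asboolT w_in); case: ifPn => [/asboolP [r [r_gt0 isolated]]|_].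
  have [z' [z'_in [z'_near _]]] := near 1 r ltr01 r_gt0.
  by case: (isolated z' z'_in).
apply: le_ereal_inf_tmp => _ [r [r_gt0 ->]]; apply/lee_addgt0Pr => e e_gt0.
have [z' [z'_in [z'_near ratio_ge]]] := near e r e_gt0 r_gt0.
rewrite -leeBlDr // -EFinB; apply: le_trans ratio_ge _.
by apply: ereal_sup_ubound; exists z'.
Qed.

End Slope.

Lemma tau_range_le (R : realType) (lam tau s : R) :
  tau_range lam tau -> 0 < s -> s <= tau -> tau_range lam s.
Proof.
by move=> [_ tau_lt] s_gt0 s_le; split => //; apply: le_lt_trans tau_lt; rewrite lee_fin.
Qed.

Lemma tau_range_gt0 (R : realType) (lam tau : R) : tau_range lam tau -> 0 < 1 + lam * tau.
Proof.
move=> [tau_gt0]; rewrite /inv_lamneg /lamneg.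
have lam_le : - lam <= Num.max (- lam) 0 by rewrite le_max lexx.
case: eqP => [lamneg0 _|/eqP lamneg_neq0]; first by rewrite lamneg0 in lam_le; nra.
have lamneg_gt0 : 0 < Num.max (- lam) 0 by rewrite lt_neqAle eq_sym lamneg_neq0 le_max lexx orbT.
rewrite lte_fin -(ltr_pM2r lamneg_gt0) mulVf // => tau_lt; nra.
Qed.

Section Resolvent.
Variables (R : realType) (X Y : Type) (dX : X -> X -> R) (dY : Y -> Y -> R).
Hypotheses (hX : is_metric dX) (hY : is_metric dY).
Variables (phi : X * Y -> \bar R) (x0 : X) (y0 : Y).

Let p x y := fine (phi (x, y)).
Let Phir s x y := p x y + (dX x x0 ^+ 2 - dY y y0 ^+ 2) / (2 * s).

Lemma PhiE s x y : DX phi x -> DY phi y ->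
  Phi dX dY phi s (x0, y0) (x, y) = (Phir s x y)%:E.
Proof. by move=> hx hy; rewrite /Phi /= (Dphi_fin hx hy) EFinD. Qed.

Variables (tau : R) (x1 : X) (y1 : Y).
Hypothesis tau_gt0 : 0 < tau.
Hypothesis saddle : saddle_point (Phi dX dY phi tau (x0, y0)) (x1, y1).

(* Phi_tau(z; x1, y') <= Phi_tau(z; x, y1) < +oo for any x in D_X phi, and
   symmetrically in the second variable. *)
Lemma saddle_point_Dphi : proper_fun phi -> Dphi phi (x1, y1).
Proof.
move=> [[x y] [/= x_in y_in]]; split => [y'|x'] /=.
- have := le_trans (saddle x y').1 (saddle x y').2; rewrite /Phi /=.
  have := x_in y1; case: (phi (x1, y')) => [r _ _|x_y1_fin|] //; first exact: ltry.
  by move: x_y1_fin; case: (phi (x, y1)).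
- have := le_trans (saddle x' y).1 (saddle x' y).2; rewrite /Phi /=.
  have := y_in x1; case: (phi (x', y1)) => [r _ _||x1_y_fin] //; first exact: ltNyr.
  by move: x1_y_fin; case: (phi (x1, y)).
Qed.

Hypothesis J_in : Dphi phi (x1, y1).
Let D := dZ dX dY (x1, y1) (x0, y0).

Lemma slope_saddle_point_le : (slope dX dY phi (x1, y1) <= (D / tau)%:E)%E.
Proof.
apply: slope_le => //; first by rewrite divr_ge0 ?dZ_ge0 ?ltW.
move=> e e_gt0; exists (2 * tau * e); split; first by rewrite !mulr_gt0.
move=> [x y] [/= x_in y_in] /andP[rho_gt0 rho_lt].
rewrite (slope_ratioE dX dY (Dphi_fin J_in.1 y_in) (Dphi_fin x_in J_in.2)).
rewrite lee_fin ler_pdivrMr // ge_max; apply/andP; split; last first.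
  by rewrite mulr_ge0 ?addr_ge0 ?divr_ge0 ?dZ_ge0 ?ltW.
have := le_trans (saddle x y).1 (saddle x y).2.
rewrite /= (PhiE _ J_in.1 y_in) (PhiE _ x_in J_in.2) lee_fin.
move=> /(mulr_subr_le_of_le_div (mulr_gt0 (ltr0Sn _ 1) tau_gt0)) saddle_gap.
set rho := dZ dX dY (x, y) (x1, y1) in rho_gt0 rho_lt *.
have tri : dZ dX dY (x, y) (x0, y0) <= rho + D := dZ_triangle hX hY _ _ _.
have := sqr_dZ dX dY (x, y) (x0, y0); have := sqr_dZ dX dY (x1, y1) (x0, y0) => /= D2 z2.
have sq : dZ dX dY (x, y) (x0, y0) ^+ 2 <= (rho + D) ^+ 2.
  by rewrite ler_sqr ?nnegrE ?addr_ge0 ?dZ_ge0.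
have rho_sq : rho * rho <= 2 * tau * e * rho by rewrite ler_pM2r // ltW.
rewrite -(ler_pM2l (mulr_gt0 (ltr0Sn _ 1) tau_gt0)).
have -> : 2 * tau * ((D / tau + e) * rho) = 2 * D * rho + 2 * tau * e * rho.
  by field; rewrite gt_eqF.
rewrite -/D in D2; rewrite sqrrD in sq; rewrite /= /p in saddle_gap; lra.
Qed.

Variables (lam : R) (gam : R -> X) (sig : R -> Y).
Hypotheses (hA1 : A1 phi) (z_in : Dphi phi (x0, y0)).
Hypotheses (gam0 : gam 0 = x0) (gam1 : gam 1 = x1) (sig0 : sig 0 = y0) (sig1 : sig 1 = y1).
Hypothesis cvx : forall s, 0 < s -> s <= tau ->
  cvx_ccv_along dX dY (Phi dX dY phi s (x0, y0)) (s^-1 + lam) gam sig.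

Lemma curve_in_DX t : 0 <= t <= 1 -> DX phi (gam t).
Proof.
move=> t01; apply: contrapT => notin.
have := (cvx tau_gt0 (lexx _) t01).1 y0.
rewrite gam0 gam1 (PhiE _ z_in.1 z_in.2) (PhiE _ J_in.1 z_in.2) -!EFinM -!EFinD.
by rewrite /Phi /= (hA1.1 _ _ notin z_in.2).
Qed.

Lemma curve_in_DY t : 0 <= t <= 1 -> DY phi (sig t).
Proof.
move=> t01; apply: contrapT => notin.
have := (cvx tau_gt0 (lexx _) t01).2 x0.
rewrite sig0 sig1 (PhiE _ z_in.1 z_in.2) (PhiE _ z_in.1 J_in.2) -!EFinM -!EFinD.
by rewrite /Phi /= (hA1.2 _ _ z_in.1 notin).
Qed.

Lemma Phir_convex s t y : 0 < s -> s <= tau -> 0 <= t <= 1 -> DY phi y ->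
  Phir s (gam t) y <= (1 - t) * Phir s x0 y + t * Phir s x1 y
                      - (s^-1 + lam) / 2 * t * (1 - t) * dX x0 x1 ^+ 2.
Proof.
move=> s_gt0 s_le t01 y_in; have := (cvx s_gt0 s_le t01).1 y.
rewrite gam0 gam1 (PhiE _ (curve_in_DX t01) y_in) (PhiE _ z_in.1 y_in) (PhiE _ J_in.1 y_in).
by rewrite -!EFinM -!EFinD lee_fin.
Qed.

Lemma Phir_concave s t x : 0 < s -> s <= tau -> 0 <= t <= 1 -> DX phi x ->
  (1 - t) * Phir s x y0 + t * Phir s x y1
    + (s^-1 + lam) / 2 * t * (1 - t) * dY y0 y1 ^+ 2 <= Phir s x (sig t).
Proof.
move=> s_gt0 s_le t01 x_in; have := (cvx s_gt0 s_le t01).2 x.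
rewrite sig0 sig1 (PhiE _ x_in (curve_in_DY t01)) (PhiE _ x_in z_in.2) (PhiE _ x_in J_in.2).
by rewrite -!EFinM -!EFinD lee_fin.
Qed.

Lemma dX_curve_le t : 0 <= t <= 1 -> dX (gam t) x0 <= t * dX x1 x0.
Proof.
move=> t01; have t_ge0 : 0 <= t by case/andP: t01.
apply: (le_mul_of_sqr_le_small (metric_ge0 hX _ _) (metric_ge0 hX _ _) t_ge0 tau_gt0).
move=> s s_gt0 s_le.
have := Phir_convex s_gt0 s_le t01 z_in.2.
rewrite /Phir !(metric_xx hX, metric_xx hY) (hX.2.1 x0 x1) expr0n /= => cvx_y0.
apply: (sqr_le_of_strong_convex (l := lam)
  (fa := p (gam t) y0) (f0 := p x0 y0) (f1 := p x1 y0) s_gt0).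
lra.
Qed.

Lemma dY_curve_le t : 0 <= t <= 1 -> dY (sig t) y0 <= t * dY y1 y0.
Proof.
move=> t01; have t_ge0 : 0 <= t by case/andP: t01.
apply: (le_mul_of_sqr_le_small (metric_ge0 hY _ _) (metric_ge0 hY _ _) t_ge0 tau_gt0).
move=> s s_gt0 s_le.
have := Phir_concave s_gt0 s_le t01 z_in.1.
rewrite /Phir !(metric_xx hX, metric_xx hY) (hY.2.1 y0 y1) expr0n /= => ccv_x0.
apply: (sqr_le_of_strong_convex (l := lam)
  (fa := - p x0 (sig t)) (f0 := - p x0 y0) (f1 := - p x0 y1) s_gt0).
lra.
Qed.

Let mu := tau^-1 + lam.

Lemma saddle_gap_X : mu / 2 * dX x0 x1 ^+ 2 <= Phir tau x0 y1 - Phir tau x1 y1.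
Proof.
apply: strong_convex_min_gap => t t_gt0 t_lt1.
have t01 : 0 <= t <= 1 by rewrite !ltW.
have := (saddle (gam t) y1).2; rewrite /= (PhiE _ J_in.1 J_in.2).
rewrite (PhiE _ (curve_in_DX t01) J_in.2) lee_fin => min_J.
have := Phir_convex tau_gt0 (lexx _) t01 J_in.2; rewrite -/mu; lra.
Qed.

Lemma saddle_gap_Y : mu / 2 * dY y0 y1 ^+ 2 <= Phir tau x1 y1 - Phir tau x1 y0.
Proof.
have -> : Phir tau x1 y1 - Phir tau x1 y0 = - Phir tau x1 y0 - - Phir tau x1 y1.
  by rewrite opprK addrC.
apply: strong_convex_min_gap => t t_gt0 t_lt1.
have t01 : 0 <= t <= 1 by rewrite !ltW.
have := (saddle x1 (sig t)).1; rewrite /= (PhiE _ J_in.1 J_in.2).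
rewrite (PhiE _ J_in.1 (curve_in_DY t01)) lee_fin => max_J.
have := Phir_concave tau_gt0 (lexx _) t01 J_in.1; rewrite -/mu; lra.
Qed.

Lemma curve_gap t : 0 <= t <= 1 ->
  mu / 2 * t * (2 - t) * D ^+ 2 <= p x0 (sig t) - p (gam t) y0.
Proof.
move=> t01; have t_ge0 : 0 <= t by case/andP: t01.
have cvx_y0 := Phir_convex tau_gt0 (lexx _) t01 z_in.2.
have ccv_x0 := Phir_concave tau_gt0 (lexx _) t01 z_in.1.
have gap := ler_wpM2l t_ge0 (lerD saddle_gap_X saddle_gap_Y).
have D2 : D ^+ 2 = dX x1 x0 ^+ 2 + dY y1 y0 ^+ 2 := sqr_dZ dX dY (x1, y1) (x0, y0).
have a_ge0 : 0 <= dX (gam t) x0 ^+ 2 / (2 * tau) by rewrite divr_ge0 ?sqr_ge0 ?mulr_ge0 ?ltW.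
have b_ge0 : 0 <= dY (sig t) y0 ^+ 2 / (2 * tau) by rewrite divr_ge0 ?sqr_ge0 ?mulr_ge0 ?ltW.
rewrite -/mu /Phir !(metric_xx hX, metric_xx hY) (hX.2.1 x0 x1) (hY.2.1 y0 y1) expr0n /=
  in cvx_y0 ccv_x0 gap.
rewrite D2; lra.
Qed.

Lemma dZ_curve_le t : 0 <= t <= 1 -> dZ dX dY (gam t, sig t) (x0, y0) <= t * D.
Proof.
move=> t01; have t_ge0 : 0 <= t by case/andP: t01.
have a_le : dX (gam t) x0 ^+ 2 <= (t * dX x1 x0) ^+ 2.
  by rewrite ler_sqr ?nnegrE ?mulr_ge0 ?(metric_ge0 hX) ?dX_curve_le.
have b_le : dY (sig t) y0 ^+ 2 <= (t * dY y1 y0) ^+ 2.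
  by rewrite ler_sqr ?nnegrE ?mulr_ge0 ?(metric_ge0 hY) ?dY_curve_le.
rewrite -ler_sqr ?nnegrE ?mulr_ge0 ?dZ_ge0 // exprMn /D !sqr_dZ /=.
rewrite !exprMn in a_le b_le; lra.
Qed.

Hypothesis mu_gt0 : 0 < mu.

Lemma slope_ge_mu_dist : ((mu * D)%:E <= slope dX dY phi (x0, y0))%E.
Proof.
have [D0|D_neq0] := eqVneq D 0; first by rewrite D0 mulr0 slope_ge0.
have D_gt0 : 0 < D by rewrite lt_neqAle eq_sym D_neq0 dZ_ge0.
apply: slope_ge z_in _ => e r e_gt0 r_gt0.
pose t := Num.min 1 (Num.min (r / (2 * D)) (e / (mu * D))).
have t_gt0 : 0 < t by rewrite !lt_min ltr01 !divr_gt0 ?mulr_gt0.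
have t_le1 : t <= 1 by rewrite ge_min lexx.
have t01 : 0 <= t <= 1 by rewrite ltW.
have tD_lt : t * D < r.
  have : t <= r / (2 * D) by rewrite !ge_min lexx orbT.
  rewrite ler_pdivlMr ?mulr_gt0 //; lra.
have t_muD : t * (mu * D) <= e.
  have : t <= e / (mu * D) by rewrite !ge_min lexx !orbT.
  by rewrite ler_pdivlMr ?mulr_gt0.
have gap := curve_gap t01.
set r' := dZ dX dY (gam t, sig t) (x0, y0).
have r'_le : r' <= t * D := dZ_curve_le t01.
have r'_gt0 : 0 < r'.
  rewrite lt_neqAle dZ_ge0 andbT; apply/eqP => /esym/(dZ_eq0 hX hY) [gamt sigt].
  rewrite gamt sigt subrr in gap.
  have : 0 < mu / 2 * t * (2 - t) * D ^+ 2 by rewrite !mulr_gt0 ?exprn_gt0 ?divr_gt0 //; lra.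
  lra.
exists (gam t, sig t); split; first by split; [exact: curve_in_DX | exact: curve_in_DY].
split; first by rewrite r'_gt0 (le_lt_trans r'_le tD_lt).
rewrite (slope_ratioE dX dY (Dphi_fin z_in.1 (curve_in_DY t01))
                            (Dphi_fin (curve_in_DX t01) z_in.2)).
rewrite lee_fin.
apply: le_trans (ratio_ge_of_gap mu_gt0 D_gt0 t_gt0 t_le1 t_muD r'_gt0 r'_le gap) _.
by rewrite ler_pM2r ?invr_gt0 // le_max lexx.
Qed.

End Resolvent.

Theorem mainTheorem12 (R : realType) (X Y : Type)
  (dX : X -> X -> R) (dY : Y -> Y -> R)
  (hX : is_metric dX) (hY : is_metric dY)
  (cX : complete_metric dX) (cY : complete_metric dY)
  (phi : X * Y -> \bar R) (lam : R)
  (hprop : proper_fun phi) (hclosed : closed_fun dX dY phi)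
  (hA1 : A1 phi) (hA2 : A2 dX dY phi lam)
  (z : X * Y) (tau : R) (htau : tau_range lam tau)
  (J : X * Y) (hJ : saddle_point (Phi dX dY phi tau z) J) :
  (slope dX dY phi J <= (dZ dX dY J z / tau)%:E)%E /\
  ((dZ dX dY J z / tau)%:E <= ((1 + lam * tau)^-1)%:E * slope dX dY phi z)%E /\
  (Dphi phi J /\ (slope dX dY phi J < +oo)%E).
Proof.
(* Completeness and closedness only serve to produce the saddle point J,
   which is given here. *)
have tau_gt0 : 0 < tau := htau.1.
have lam_tau_gt0 := tau_range_gt0 htau.
have mu_gt0 : 0 < tau^-1 + lam.
  have -> : tau^-1 + lam = (1 + lam * tau) / tau by field; rewrite gt_eqF.
  by rewrite divr_gt0.
case: z hJ hA2 => x0 y0 hJ hA2; case: J hJ => x1 y1 hJ.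
have J_in := saddle_point_Dphi hJ hprop.
have slope_J := slope_saddle_point_le hX hY tau_gt0 hJ J_in.
split; first exact: slope_J.
split; last by split => //; apply: le_lt_trans slope_J (ltry _).
have -> : dZ dX dY (x1, y1) (x0, y0) / tau
    = (1 + lam * tau)^-1 * ((tau^-1 + lam) * dZ dX dY (x1, y1) (x0, y0)).
  by field; rewrite !gt_eqF.
rewrite EFinM lee_pmul2l ?lte_fin ?invr_gt0 //.
have [z_in|z_notin] := pselect (Dphi phi (x0, y0)); last by rewrite slope_notin_Dphi ?leey.
have [gam [sig [_ [_ [gam0 [gam1 [sig0 [sig1 cvx]]]]]]]] :=
  hA2 (x0, y0) (x0, y0) (x1, y1) z_in J_in.
apply: (slope_ge_mu_dist hX hY tau_gt0 hJ J_in hA1 z_in gam0 gam1 sig0 sig1 _ mu_gt0).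
by move=> s s_gt0 s_le; apply: cvx; exact: tau_range_le htau s_gt0 s_le.
Qed.
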